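(* Let $\mathbf k$ be an algebraically closed field of characteristic zero, $n\geq 1$, $\zeta\in\mathbf k$ an $n$-th root of unity, and let $F:\mathcal D_{\zeta,n}\to\langle\delta_1\rangle$ be the functor defined below. Then for every $k\in\mathbb N$ the induced map $\mathrm{Hom}_{\mathcal D_{\zeta,n}}(k,0)\to\mathrm{Hom}_{\mathrm{Vec}_{\mathbb Z_n}^{\zeta}}(\delta_1^{\otimes k},\mathbf 1)$ is injective.
   Context: $\mathrm{Vec}_{\mathbb Z_n}^{\zeta}$ is the fusion category of finite-dimensional $\mathbb Z_n$-graded $\mathbf k$-vector spaces with graded tensor product, unit $\mathbf 1=\delta_0$, unit isomorphisms identities, and associativity on $(\delta_a\otimes\delta_b)\otimes\delta_c$ given by multiplication by $\zeta^{\,a(b+c-\overline{b+c})/n}$ ($a,b,c\in\{0,\dots,n-1\}$, $\overline{m}$ the remainder of $m$ mod $n$); $\delta_a$ is the simple object concentrated in degree $a$. $\langle\delta_1\rangle$ is the full monoidal subcategory of $\mathrm{Vec}_{\mathbb Z_n}^{\zeta}$ with objects $\delta_1^{\otimes k}$, $k\in\mathbb N$. $\mathcal D_{\zeta,n}$ is the strict $\mathbf k$-linear monoidal category with objects $k\in\mathbb N$, $k\otimes l=k+l$, unit $0$, whose morphisms are generated under composition, tensor product and linear combinations by $\mathrm{id}_1$, $f_n:n\to 0$ and $g_n:0\to n$, subject to $f_n\circ g_n=\mathrm{id}_0$, $g_n\circ f_n=\mathrm{id}_n$, and $\mathrm{id}_1\otimes f_n=\zeta\,(f_n\otimes\mathrm{id}_1)$.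 The $\mathbf k$-linear monoidal functor $F$ is defined by $F(1)=\delta_1$, $F(f_n)=\lambda$ the canonical isomorphism $\delta_1^{\otimes n}\xrightarrow{\sim}\mathbf 1$, and $F(g_n)=\lambda^{-1}$. *)

From HB Require Import structures.
From mathcomp Require Import all_boot all_order all_algebra.
Set Implicit Arguments. Unset Strict Implicit. Unset Printing Implicit Defensive.
Import GRing.Theory.
Local Open Scope ring_scope.

(** Morphisms are raw expressions built from identities, the generators
    f_n : n -> 0 and g_n : 0 -> n, composition, tensor product and
    k-linear combinations, modulo the smallest congruence containing the
    axioms of a strict k-linear monoidal category and the three defining
    relations. *)

Section D.
Variable K : fieldType.

Inductive tm : Type :=
| Id of nat                 (* identity of the object k (id_1^{(x)k}) *)
| Fg
| Gg
| Comp of tm & tm           (* Comp s t = s \o t *)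
| Tens of tm & tm
| Zero of nat & nat
| Add of tm & tm
| Scale of K & tm.

Inductive Typ (n : nat) : tm -> nat -> nat -> Prop :=
| TId k : Typ n (Id k) k k
| TF : Typ n Fg n 0
| TG : Typ n Gg 0 n
| TComp s t a b c : Typ n t a b -> Typ n s b c -> Typ n (Comp s t) a c
| TTens s t a b c d : Typ n s a b -> Typ n t c d ->
    Typ n (Tens s t) (a + c)%N (b + d)%N
| TZero a b : Typ n (Zero a b) a b
| TAdd s t a b : Typ n s a b -> Typ n t a b -> Typ n (Add s t) a b
| TScale c t a b : Typ n t a b -> Typ n (Scale c t) a b.

Inductive Eqv (n : nat) (zeta : K) : tm -> tm -> Prop :=
| Erefl t : Eqv n zeta t t
| Esym s t : Eqv n zeta s t -> Eqv n zeta t s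
| Etrans s t u : Eqv n zeta s t -> Eqv n zeta t u -> Eqv n zeta s u
| EComp s s' t t' : Eqv n zeta s s' -> Eqv n zeta t t' ->
    Eqv n zeta (Comp s t) (Comp s' t')
| ETens s s' t t' : Eqv n zeta s s' -> Eqv n zeta t t' ->
    Eqv n zeta (Tens s t) (Tens s' t')
| EAdd s s' t t' : Eqv n zeta s s' -> Eqv n zeta t t' ->
    Eqv n zeta (Add s t) (Add s' t')
| EScale c t t' : Eqv n zeta t t' -> Eqv n zeta (Scale c t) (Scale c t')
| Eidl t a b : Typ n t a b -> Eqv n zeta (Comp (Id b) t) t
| Eidr t a b : Typ n t a b -> Eqv n zeta (Comp t (Id a)) t
| Eassoc u s t a b c d : Typ n t a b -> Typ n s b c -> Typ n u c d ->
    Eqv n zeta (Comp (Comp u s) t) (Comp u (Comp s t))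
| Etassoc s t u a b c d e f : Typ n s a b -> Typ n t c d -> Typ n u e f ->
    Eqv n zeta (Tens (Tens s t) u) (Tens s (Tens t u))
| Etunitl t a b : Typ n t a b -> Eqv n zeta (Tens (Id 0) t) t
| Etunitr t a b : Typ n t a b -> Eqv n zeta (Tens t (Id 0)) t
| Etid a b : Eqv n zeta (Tens (Id a) (Id b)) (Id (a + b))
| Einterchange s s' t t' a b c d e f :
    Typ n s a b -> Typ n s' b c -> Typ n t d e -> Typ n t' e f ->
    Eqv n zeta (Comp (Tens s' t') (Tens s t)) (Tens (Comp s' s) (Comp t' t))
| Eaddc s t a b : Typ n s a b -> Typ n t a b -> Eqv n zeta (Add s t) (Add t s)
| Eadda s t u a b : Typ n s a b -> Typ n t a b -> Typ n u a b ->
    Eqv n zeta (Add (Add s t) u) (Add s (Add t u))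
| Eadd0 t a b : Typ n t a b -> Eqv n zeta (Add t (Zero a b)) t
| EaddN t a b : Typ n t a b ->
    Eqv n zeta (Add t (Scale (-1) t)) (Zero a b)
| Escale1 t a b : Typ n t a b -> Eqv n zeta (Scale 1 t) t
| EscaleM c d t a b : Typ n t a b ->
    Eqv n zeta (Scale c (Scale d t)) (Scale (c * d) t)
| EscaleDl c d t a b : Typ n t a b ->
    Eqv n zeta (Scale (c + d) t) (Add (Scale c t) (Scale d t))
| EscaleDr c s t a b : Typ n s a b -> Typ n t a b ->
    Eqv n zeta (Scale c (Add s t)) (Add (Scale c s) (Scale c t))
| ECompDl s s' t a b c : Typ n t a b -> Typ n s b c -> Typ n s' b c ->
    Eqv n zeta (Comp (Add s s') t) (Add (Comp s t) (Comp s' t))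
| ECompDr s t t' a b c : Typ n t a b -> Typ n t' a b -> Typ n s b c ->
    Eqv n zeta (Comp s (Add t t')) (Add (Comp s t) (Comp s t'))
| ECompZl x s t a b c : Typ n t a b -> Typ n s b c ->
    Eqv n zeta (Comp (Scale x s) t) (Scale x (Comp s t))
| ECompZr x s t a b c : Typ n t a b -> Typ n s b c ->
    Eqv n zeta (Comp s (Scale x t)) (Scale x (Comp s t))
| ETensDl s s' t a b c d : Typ n s a b -> Typ n s' a b -> Typ n t c d ->
    Eqv n zeta (Tens (Add s s') t) (Add (Tens s t) (Tens s' t))
| ETensDr s t t' a b c d : Typ n s a b -> Typ n t c d -> Typ n t' c d ->
    Eqv n zeta (Tens s (Add t t')) (Add (Tens s t) (Tens s t'))
| ETensZl x s t a b c d : Typ n s a b -> Typ n t c d ->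
    Eqv n zeta (Tens (Scale x s) t) (Scale x (Tens s t))
| ETensZr x s t a b c d : Typ n s a b -> Typ n t c d ->
    Eqv n zeta (Tens s (Scale x t)) (Scale x (Tens s t))
| Efg : Eqv n zeta (Comp Fg Gg) (Id 0)
| Egf : Eqv n zeta (Comp Gg Fg) (Id n)
| Ezeta : Eqv n zeta (Tens (Id 1) Fg) (Scale zeta (Tens Fg (Id 1))).

(** source / target of a raw term (meaningful on well-typed terms) *)
Fixpoint src (n : nat) (t : tm) : nat :=
  match t with
  | Id k => k | Fg => n | Gg => 0
  | Comp _ t => src n t
  | Tens s t => (src n s + src n t)%N
  | Zero a _ => a | Add s _ => src n s | Scale _ t => src n t
  end.
Fixpoint tgt (n : nat) (t : tm) : nat :=
  match t with
  | Id k => k | Fg => 0 | Gg => n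
  | Comp s _ => tgt n s
  | Tens s t => (tgt n s + tgt n t)%N
  | Zero _ b => b | Add s _ => tgt n s | Scale _ t => tgt n t
  end.

(** * The target: <delta_1> inside Vec_{Z_n}^zeta, skeletally.
    delta_1^{(x)k} (left-nested bracketing, delta_1^{(x)0} = 1) is the
    one-dimensional space concentrated in degree k mod n, whose basis vector
    is the tensor of the basis vectors of delta_1; a morphism
    delta_1^{(x)k} -> delta_1^{(x)l} (k = l mod n) is thus a scalar.
    The associator on (d_a (x) d_b) (x) d_c is omega a b c, and the monoidal
    structure J k l : F(k) (x) F(l) -> F(k+l) of F is the composite of
    inverse associators re-bracketing to the left:
      J k 0 = 1,  J k (l+1) = J k l * (omega (k%%n) (l%%n) 1)^-1. *)
Definition omega (n : nat) (zeta : K) (a b c : nat) : K :=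
  zeta ^+ (a * ((b + c - (b + c) %% n) %/ n)).

Fixpoint Jstr (n : nat) (zeta : K) (k l : nat) : K :=
  match l with
  | 0 => 1
  | l'.+1 => Jstr n zeta k l' * (omega n zeta (k %% n) (l' %% n) 1)^-1
  end.

(** the functor F on raw terms: F(f_n) = lambda and F(g_n) = lambda^-1,
    lambda being the canonical isomorphism delta_1^{(x)n} = 1 (scalar 1),
    F(s (x) t) = J o (F s (x) F t) o J^-1 *)
Fixpoint Fint (n : nat) (zeta : K) (t : tm) : K :=
  match t with
  | Id _ => 1
  | Fg => 1
  | Gg => 1
  | Comp s t => Fint n zeta s * Fint n zeta t
  | Tens s t => Jstr n zeta (tgt n s) (tgt n t) * (Fint n zeta s * Fint n zeta t)
                 / Jstr n zeta (src n s) (src n t)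
  | Zero _ _ => 0
  | Add s t => Fint n zeta s + Fint n zeta t
  | Scale c t => c * Fint n zeta t
  end.

End D.

From mathcomp Require Import all_boot all_order all_algebra.
From mathcomp Require Import zify.
From Stdlib Require Import Setoid Morphisms.
Import GRing.Theory.
Local Open Scope ring_scope.

(* Every morphism [a -> b] of D_{zeta,n} is a scalar multiple of a single
   canonical one, [canon a b]: zero unless [a = b mod n], and otherwise the
   composite that strips [a %/ n] copies of f_n off the left end and then puts
   back [b %/ n] copies of g_n there.  The relation
   [id_1 (x) f_n = zeta (f_n (x) id_1)] slides a generator past m wires at the
   cost of [zeta ^+ m], so composites and tensor products of canonical
   morphisms are canonical up to such powers of zeta, and these powers are
   exactly the coherence scalars [Jstr] through which F acts on tensor
   products.  Hence, by induction on terms, every term [t] equals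
   [Fint t] times [canon a b], and two terms with the same image under F are
   equal. *)

Arguments Id {K} _. Arguments Fg {K}. Arguments Gg {K}. Arguments Zero {K} _ _.

Section NormalForm.
Variables (K : fieldType) (n : nat) (z : K).
Local Notation E := (Eqv n z).
Local Notation tm := (tm K).

#[local] Hint Resolve Erefl : core.

#[local] Instance Eqv_equiv : Equivalence E.
Proof. split; [exact: Erefl | exact: Esym | exact: Etrans]. Qed.
#[local] Instance Comp_proper : Proper (E ==> E ==> E) (@Comp K).
Proof. by move=> ? ? ? ? ? ?; apply: EComp. Qed.
#[local] Instance Tens_proper : Proper (E ==> E ==> E) (@Tens K).
Proof. by move=> ? ? ? ? ? ?; apply: ETens. Qed.
#[local] Instance Add_proper : Proper (E ==> E ==> E) (@Add K).
Proof. by move=> ? ? ? ? ? ?; apply: EAdd. Qed.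
#[local] Instance Scale_proper c : Proper (E ==> E) (@Scale K c).
Proof. by move=> ? ? ?; apply: EScale. Qed.

(* A decidable typing judgement, so that the typing side conditions of the
   axioms of [Eqv] can be discharged by computation. *)
Fixpoint typed (t : tm) : bool :=
  match t with
  | Comp s t => [&& typed s, typed t & tgt n t == src n s]
  | Tens s t => typed s && typed t
  | Add s t => [&& typed s, typed t, src n s == src n t & tgt n s == tgt n t]
  | Scale _ t => typed t
  | _ => true
  end.

Lemma typedP {t} : typed t -> Typ n t (src n t) (tgt n t).
Proof.
elim: t => //=; try by constructor.
- move=> s IHs t IHt /and3P[/IHs hs /IHt ht /eqP e].
  by rewrite e in ht; exact: TComp ht hs.
- by move=> s IHs t IHt /andP[/IHs hs /IHt ht]; exact: TTens.
- move=> s IHs t IHt /and4P[/IHs hs /IHt ht /eqP e1 /eqP e2].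
  by rewrite -e1 -e2 in ht; exact: TAdd.
- by move=> c t IHt /IHt h; exact: TScale.
Qed.

Lemma Typ_typed {t a b} : Typ n t a b -> [/\ typed t, src n t = a & tgt n t = b].
Proof.
elim=> {t a b} //=.
- by move=> s t a b c _ [-> -> ->] _ [-> -> ->]; rewrite eqxx.
- by move=> s t a b c d _ [-> -> ->] _ [-> -> ->].
- by move=> s t a b _ [-> -> ->] _ [-> -> ->]; rewrite !eqxx.
Qed.

Lemma typed_Typ t a b : typed t -> src n t = a -> tgt n t = b -> Typ n t a b.
Proof. by move=> /typedP + <- <-. Qed.

Lemma Eqv_idl t b : typed t -> tgt n t = b -> E (Comp (Id b) t) t.
Proof. by move=> /typedP h <-; exact: Eidl h. Qed.

Lemma Eqv_idr t a : typed t -> src n t = a -> E (Comp t (Id a)) t.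
Proof. by move=> /typedP h <-; exact: Eidr h. Qed.

Lemma Eqv_assoc u s t : typed u -> typed s -> typed t ->
  src n u = tgt n s -> src n s = tgt n t -> E (Comp (Comp u s) t) (Comp u (Comp s t)).
Proof.
move=> /typedP hu /typedP hs /typedP ht e1 e2.
by rewrite e2 in hs; rewrite e1 in hu; exact: Eassoc ht hs hu.
Qed.

Lemma Eqv_tassoc s t u : typed s -> typed t -> typed u ->
  E (Tens (Tens s t) u) (Tens s (Tens t u)).
Proof. by move=> /typedP h1 /typedP h2 /typedP h3; exact: Etassoc h1 h2 h3. Qed.

Lemma Eqv_unitl t : typed t -> E (Tens (Id 0) t) t.
Proof. by move=> /typedP h; exact: Etunitl h. Qed.

Lemma Eqv_unitr t : typed t -> E (Tens t (Id 0)) t.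
Proof. by move=> /typedP h; exact: Etunitr h. Qed.

Lemma Eqv_interchange s s' t t' : typed s -> typed s' -> typed t -> typed t' ->
  src n s' = tgt n s -> src n t' = tgt n t ->
  E (Comp (Tens s' t') (Tens s t)) (Tens (Comp s' s) (Comp t' t)).
Proof.
move=> /typedP h1 /typedP h2 /typedP h3 /typedP h4 e1 e2.
by rewrite e1 in h2; rewrite e2 in h4; exact: Einterchange h1 h2 h3 h4.
Qed.

Lemma Eqv_scale1 t : typed t -> E (Scale 1 t) t.
Proof. by move=> /typedP h; exact: Escale1 h. Qed.

Lemma Eqv_scaleM c d t : typed t -> E (Scale c (Scale d t)) (Scale (c * d) t).
Proof. by move=> /typedP h; exact: EscaleM h. Qed.

Lemma Eqv_compZl x s t : typed s -> typed t -> src n s = tgt n t ->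
  E (Comp (Scale x s) t) (Scale x (Comp s t)).
Proof. by move=> /typedP h1 /typedP h2 e; rewrite e in h1; exact: ECompZl h2 h1. Qed.

Lemma Eqv_compZr x s t : typed s -> typed t -> src n s = tgt n t ->
  E (Comp s (Scale x t)) (Scale x (Comp s t)).
Proof. by move=> /typedP h1 /typedP h2 e; rewrite e in h1; exact: ECompZr h2 h1. Qed.

Lemma Eqv_tensZl x s t : typed s -> typed t -> E (Tens (Scale x s) t) (Scale x (Tens s t)).
Proof. by move=> /typedP h1 /typedP h2; exact: ETensZl h1 h2. Qed.

Lemma Eqv_tensZr x s t : typed s -> typed t -> E (Tens s (Scale x t)) (Scale x (Tens s t)).
Proof. by move=> /typedP h1 /typedP h2; exact: ETensZr h1 h2. Qed.

Lemma Eqv_scale0 {u a b} : Typ n u a b -> E (Scale 0 u) (Zero a b).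
Proof.
move=> h; rewrite -(addrN (1 : K)) (@EscaleDl K n z 1 (-1) u a b h) (Escale1 z h).
exact: EaddN h.
Qed.

Lemma Eqv_scale0_eq {u v a b} : Typ n u a b -> Typ n v a b -> E (Scale 0 u) (Scale 0 v).
Proof. by move=> hu hv; rewrite (Eqv_scale0 hu) (Eqv_scale0 hv). Qed.

Lemma id_tens_f m : E (Tens (Id m) Fg) (Scale (z ^+ m) (Tens Fg (Id m))).
Proof.
elim: m => [|m IH]; first by rewrite Eqv_unitl // Eqv_unitr // expr0 Eqv_scale1.
rewrite -add1n -(Etid n z 1 m) Eqv_tassoc // IH Eqv_tensZr // -Eqv_tassoc //.
by rewrite (Ezeta n z) Eqv_tensZl // Eqv_tassoc // Eqv_scaleM // add1n exprSr.
Qed.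

Fixpoint fpow q x : tm :=
  if q is q'.+1 then Comp (fpow q' x) (Tens Fg (Id (q' * n + x))) else Id x.

Fixpoint gpow q x : tm :=
  if q is q'.+1 then Comp (Tens Gg (Id (q' * n + x))) (gpow q' x) else Id x.

Lemma fpow_spec q x :
  [/\ typed (fpow q x), src n (fpow q x) = (q * n + x)%N & tgt n (fpow q x) = x].
Proof. by elim: q => [|q [h1 h2 h3]] //=; rewrite h1 h2 h3 /=; split=> //; lia. Qed.

Lemma gpow_spec q x :
  [/\ typed (gpow q x), src n (gpow q x) = x & tgt n (gpow q x) = (q * n + x)%N].
Proof. by elim: q => [|q [h1 h2 h3]] //=; rewrite h1 h2 h3 /=; split=> //; lia. Qed.

Lemma typed_fpow q x : typed (fpow q x). Proof. by case: (fpow_spec q x). Qed.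
Lemma src_fpow q x : src n (fpow q x) = (q * n + x)%N. Proof. by case: (fpow_spec q x). Qed.
Lemma tgt_fpow q x : tgt n (fpow q x) = x. Proof. by case: (fpow_spec q x). Qed.
Lemma typed_gpow q x : typed (gpow q x). Proof. by case: (gpow_spec q x). Qed.
Lemma src_gpow q x : src n (gpow q x) = x. Proof. by case: (gpow_spec q x). Qed.
Lemma tgt_gpow q x : tgt n (gpow q x) = (q * n + x)%N. Proof. by case: (gpow_spec q x). Qed.

#[local] Hint Rewrite typed_fpow src_fpow tgt_fpow typed_gpow src_gpow tgt_gpow : typing.

Local Ltac typecheck :=
  solve [rewrite /=; autorewrite with typing; rewrite /= ?eqxx; done || lia].

Lemma fpow_gpow q x : E (Comp (fpow q x) (gpow q x)) (Id x).
Proof.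
elim: q => [|q IH] /=; first by rewrite Eqv_idl.
rewrite Eqv_assoc; try typecheck. rewrite -(Eqv_assoc (Tens Fg _)); try typecheck.
rewrite Eqv_interchange; try typecheck.
by rewrite (Efg n z) Eqv_idl // Eqv_unitl // Eqv_idl; try typecheck.
Qed.

Lemma gpow_fpow q x : E (Comp (gpow q x) (fpow q x)) (Id (q * n + x)).
Proof.
elim: q => [|q IH] /=; first by rewrite Eqv_idl.
rewrite Eqv_assoc; try typecheck. rewrite -(Eqv_assoc (gpow q x)); try typecheck.
rewrite IH Eqv_idl; try typecheck. rewrite Eqv_interchange; try typecheck.
rewrite (Egf n z) Eqv_idl // (Etid n z).
by have -> : (n + (q * n + x) = q.+1 * n + x)%N by lia.
Qed.

Lemma fpow_comp p q x : E (Comp (fpow p x) (fpow q (p * n + x))) (fpow (q + p) x).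
Proof.
elim: q => [|q IH] /=; first by rewrite Eqv_idr; try typecheck.
rewrite -(Eqv_assoc (fpow p x)); try typecheck.
by rewrite IH; have -> : (q * n + (p * n + x) = (q + p) * n + x)%N by lia.
Qed.

Lemma gpow_comp p q x : E (Comp (gpow q (p * n + x)) (gpow p x)) (gpow (q + p) x).
Proof.
elim: q => [|q IH] /=; first by rewrite Eqv_idl; try typecheck.
rewrite Eqv_assoc; try typecheck.
by rewrite IH; have -> : (q * n + (p * n + x) = (q + p) * n + x)%N by lia.
Qed.

Lemma fpow_tens_id q x d : E (Tens (fpow q x) (Id d)) (fpow q (x + d)).
Proof.
elim: q => [|q IH] /=; first by rewrite (Etid n z).
rewrite -[Id d](Eqv_idl (Id d)) // -Eqv_interchange; try typecheck.
by rewrite IH Eqv_tassoc // (Etid n z) addnA.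
Qed.

Lemma gpow_tens_id q x d : E (Tens (gpow q x) (Id d)) (gpow q (x + d)).
Proof.
elim: q => [|q IH] /=; first by rewrite (Etid n z).
rewrite -[Id d](Eqv_idl (Id d)) // -Eqv_interchange; try typecheck.
by rewrite IH Eqv_tassoc // (Etid n z) addnA.
Qed.

Lemma id_tens_fpow m q x :
  E (Tens (Id m) (fpow q x)) (Scale (z ^+ (m * q)) (fpow q (m + x))).
Proof.
elim: q => [|q IH] /=; first by rewrite (Etid n z) muln0 expr0 Eqv_scale1.
rewrite -[Id m](Eqv_idl (Id m)) // -Eqv_interchange; try typecheck.
rewrite IH -Eqv_tassoc // id_tens_f Eqv_tensZl // Eqv_tassoc // (Etid n z).
rewrite Eqv_compZl; try typecheck. rewrite Eqv_compZr; try typecheck.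
rewrite Eqv_scaleM; try typecheck.
have -> : (m + (q * n + x) = q * n + (m + x))%N by lia.
by rewrite mulnS exprD mulrC.
Qed.

Lemma id_tens_g m : z != 0 -> E (Tens (Id m) Gg) (Scale (z ^+ m)^-1 (Tens Gg (Id m))).
Proof.
move=> z_neq0.
suff -> : E (Tens Gg (Id m)) (Scale (z ^+ m) (Tens (Id m) Gg)).
  by rewrite Eqv_scaleM // mulVf ?expf_neq0 // Eqv_scale1.
transitivity (Comp (Tens (@Gg K) (Id m)) (Comp (Tens (Id m) Fg) (Tens (Id m) Gg))).
  by rewrite Eqv_interchange // (Efg n z) Eqv_idl // Eqv_unitr // Eqv_idr.
rewrite id_tens_f Eqv_compZl; try typecheck. rewrite Eqv_compZr; try typecheck.
rewrite -Eqv_assoc; try typecheck.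
by rewrite Eqv_interchange // (Egf n z) Eqv_idl // (Etid n z) addnC Eqv_idl.
Qed.

Lemma id_tens_gpow m q x : z != 0 ->
  E (Tens (Id m) (gpow q x)) (Scale (z ^+ (m * q))^-1 (gpow q (m + x))).
Proof.
move=> z_neq0; elim: q => [|q IH] /=.
  by rewrite (Etid n z) muln0 expr0 invr1 Eqv_scale1.
rewrite -[Id m](Eqv_idl (Id m)) // -Eqv_interchange; try typecheck.
rewrite IH -Eqv_tassoc // id_tens_g // Eqv_tensZl // Eqv_tassoc // (Etid n z).
rewrite Eqv_compZl; try typecheck. rewrite Eqv_compZr; try typecheck.
rewrite Eqv_scaleM; try typecheck.
have -> : (m + (q * n + x) = q * n + (m + x))%N by lia.
by rewrite mulnS exprD invfM.
Qed.

Lemma fpow_tens qa r1 qc r2 :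
  E (Tens (fpow qa r1) (fpow qc r2))
    (Scale (z ^+ ((qa * n + r1) * qc)) (fpow (qa + qc) (r1 + r2))).
Proof.
rewrite -[fpow qa r1](Eqv_idr _ (qa * n + r1)); try typecheck.
rewrite -[fpow qc r2](Eqv_idl _ r2); try typecheck.
rewrite -Eqv_interchange; try typecheck.
rewrite fpow_tens_id id_tens_fpow Eqv_compZr; try typecheck.
by rewrite -(addnA _ r1 r2) fpow_comp (addnC qc qa).
Qed.

Lemma gpow_tens qb r1 qd r2 : z != 0 ->
  E (Tens (gpow qb r1) (gpow qd r2))
    (Scale (z ^+ (r1 * qd))^-1 (gpow (qb + qd) (r1 + r2))).
Proof.
move=> z_neq0.
rewrite -[gpow qb r1](Eqv_idr _ r1); try typecheck.
rewrite -[gpow qd r2](Eqv_idl _ (qd * n + r2)); try typecheck.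
rewrite -Eqv_interchange; try typecheck.
rewrite gpow_tens_id id_tens_gpow // Eqv_compZr; try typecheck.
have -> : (r1 + (qd * n + r2) = qd * n + (r1 + r2))%N by lia.
by rewrite gpow_comp.
Qed.

Lemma gpow_fpow_carry q1 q2 e r :
  E (Comp (gpow q2 (e * n + r)) (fpow q1 (e * n + r)))
    (Comp (gpow (q2 + e) r) (fpow (q1 + e) r)).
Proof.
rewrite -fpow_comp -gpow_comp Eqv_assoc; try typecheck.
rewrite -(Eqv_assoc (gpow e r)); try typecheck.
by rewrite gpow_fpow Eqv_idl; try typecheck.
Qed.

Definition canon a b : tm :=
  if (a %% n == b %% n)%N then Comp (gpow (b %/ n) (b %% n)) (fpow (a %/ n) (a %% n))
  else Zero a b.

Lemma canon_Typ a b : Typ n (canon a b) a b.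
Proof.
rewrite /canon; case: ifP => e; last exact: TZero.
by apply: typed_Typ => /=; autorewrite with typing; rewrite -?divn_eq ?e.
Qed.

Lemma typed_canon a b : typed (canon a b). Proof. by case: (Typ_typed (canon_Typ a b)). Qed.
Lemma src_canon a b : src n (canon a b) = a. Proof. by case: (Typ_typed (canon_Typ a b)). Qed.
Lemma tgt_canon a b : tgt n (canon a b) = b. Proof. by case: (Typ_typed (canon_Typ a b)). Qed.

#[local] Hint Rewrite typed_canon src_canon tgt_canon : typing.

Lemma canon_qr qa qb r : (r < n)%N ->
  canon (qa * n + r) (qb * n + r) = Comp (gpow qb r) (fpow qa r).
Proof.
move=> r_lt_n; have n_gt0 : (0 < n)%N by apply: leq_ltn_trans r_lt_n.
by rewrite /canon !modnMDl modn_small // eqxx !divnMDl // divn_small // !addn0.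
Qed.

Lemma canon_id a : E (canon a a) (Id a).
Proof. by rewrite /canon eqxx gpow_fpow -divn_eq. Qed.

Lemma canon_comp a b c : (a %% n = b %% n)%N -> (b %% n = c %% n)%N ->
  E (Comp (canon b c) (canon a b)) (canon a c).
Proof.
move=> e1 e2; rewrite /canon e1 e2 !eqxx Eqv_assoc; try typecheck.
rewrite -(Eqv_assoc (fpow _ _)); try typecheck.
by rewrite fpow_gpow Eqv_idl; try typecheck.
Qed.

Hypothesis n_gt0 : (0 < n)%N.

Lemma canon_f : E Fg (canon n 0).
Proof.
rewrite /canon modnn mod0n eqxx divnn n_gt0 div0n /=.
by rewrite !Eqv_idl // Eqv_unitr.
Qed.

Lemma canon_g : E Gg (canon 0 n).
Proof.
rewrite /canon modnn mod0n eqxx divnn n_gt0 div0n /=.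
by rewrite !Eqv_idr // Eqv_unitr.
Qed.

Lemma Jstr_closed k l : Jstr n z k l = (z ^+ (k %% n * (l %/ n)))^-1.
Proof.
elim: l => [|l IH] /=; first by rewrite div0n muln0 expr0 invr1.
rewrite IH /omega -invfM -exprD -mulnDr.
set m := (l %% n + 1)%N.
have -> : (m - m %% n = m %/ n * n)%N by rewrite {1}(divn_eq m n) addnK.
have -> : l.+1 = (l %/ n * n + m)%N by rewrite /m addnA -divn_eq addn1.
by rewrite mulnK // divnMDl.
Qed.

Lemma Fint_eq0 {t a b} : Typ n t a b -> (a %% n != b %% n)%N -> Fint n z t = 0.
Proof.
elim=> {t a b} //=; rewrite ?modnn ?mod0n //.
- by move=> k; rewrite eqxx.
- move=> s t a b c _ IHt _ IHs ne.
  have [e|/IHt->] := eqVneq (a %% n)%N (b %% n)%N; last by rewrite mulr0.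
  by rewrite IHs ?mul0r // -e.
- move=> s t a b c d _ IHs _ IHt ne.
  have [e|/IHs->] := eqVneq (a %% n)%N (b %% n)%N; last by rewrite mul0r mulr0 mul0r.
  have [e'|/IHt->] := eqVneq (c %% n)%N (d %% n)%N; last by rewrite !mulr0 mul0r.
  by move: ne; rewrite -modnDm e e' modnDm eqxx.
- by move=> s t a b _ IHs _ IHt ne; rewrite IHs // IHt // addr0.
- by move=> c t a b _ IHt ne; rewrite IHt // mulr0.
Qed.

Hypothesis z_root : z ^+ n = 1.

Lemma z_neq0 : z != 0.
Proof.
apply/eqP => z0; move: z_root; rewrite z0 expr0n gtn_eqF //= => /esym/eqP.
by rewrite oner_eq0.
Qed.

Lemma canon_tens_qr qa qb qc qd r1 r2 : (r1 < n)%N -> (r2 < n)%N ->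
  E (Tens (canon (qa * n + r1) (qb * n + r1)) (canon (qc * n + r2) (qd * n + r2)))
    (Scale (z ^+ (r1 * qc) / z ^+ (r1 * qd))
       (canon (qa * n + r1 + (qc * n + r2)) (qb * n + r1 + (qd * n + r2)))).
Proof.
move=> r1_lt r2_lt.
have er : (r1 + r2 = (r1 + r2) %/ n * n + (r1 + r2) %% n)%N := divn_eq _ _.
move: ((r1 + r2) %/ n)%N ((r1 + r2) %% n)%N (ltn_pmod (r1 + r2) n_gt0) er => e r r_lt er.
have -> : (qa * n + r1 + (qc * n + r2) = (qa + qc + e) * n + r)%N by lia.
have -> : (qb * n + r1 + (qd * n + r2) = (qb + qd + e) * n + r)%N by lia.
rewrite !canon_qr // -gpow_fpow_carry -er -Eqv_interchange; try typecheck.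
rewrite fpow_tens gpow_tens ?z_neq0 // Eqv_compZl; try typecheck.
rewrite Eqv_compZr; try typecheck. rewrite Eqv_scaleM; try typecheck.
have -> : z ^+ ((qa * n + r1) * qc) = z ^+ (r1 * qc).
  by rewrite mulnDl exprD -mulnA mulnCA exprM z_root expr1n mul1r.
by rewrite mulrC.
Qed.

Lemma canon_tens a b c d : (a %% n = b %% n)%N -> (c %% n = d %% n)%N ->
  E (Tens (canon a b) (canon c d))
    (Scale (Jstr n z b d / Jstr n z a c) (canon (a + c) (b + d))).
Proof.
move=> e1 e2.
rewrite [a](divn_eq a n) [b](divn_eq b n) [c](divn_eq c n) [d](divn_eq d n) -e1 -e2.
rewrite canon_tens_qr ?ltn_pmod // !Jstr_closed !modnMDl !modn_mod.
by rewrite !divnMDl // !(divn_small (ltn_pmod _ n_gt0)) !addn0 invrK mulrC.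
Qed.

Lemma Eqv_Fint_canon {t a b} : Typ n t a b -> E t (Scale (Fint n z t) (canon a b)).
Proof.
elim=> {t a b} /=.
- by move=> k; rewrite canon_id Eqv_scale1.
- by rewrite -canon_f Eqv_scale1.
- by rewrite -canon_g Eqv_scale1.
- move=> s t a b c Ht IHt Hs IHs; apply: Etrans (EComp IHs IHt) _.
  rewrite Eqv_compZl; try typecheck. rewrite Eqv_compZr; try typecheck.
  rewrite Eqv_scaleM; try typecheck.
  have Hc := TComp (canon_Typ a b) (canon_Typ b c).
  have [e1|/(Fint_eq0 Ht)->] := eqVneq (a %% n)%N (b %% n)%N; last first.
    by rewrite mulr0; exact: Eqv_scale0_eq Hc (canon_Typ _ _).
  have [e2|/(Fint_eq0 Hs)->] := eqVneq (b %% n)%N (c %% n)%N; last first.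
    by rewrite mul0r; exact: Eqv_scale0_eq Hc (canon_Typ _ _).
  by rewrite canon_comp.
- move=> s t a b c d Hs IHs Ht IHt; apply: Etrans (ETens IHs IHt) _.
  have [_ -> ->] := Typ_typed Hs; have [_ -> ->] := Typ_typed Ht.
  rewrite Eqv_tensZl; try typecheck. rewrite Eqv_tensZr; try typecheck.
  rewrite Eqv_scaleM; try typecheck.
  have Hc := TTens (canon_Typ a b) (canon_Typ c d).
  have [e1|/(Fint_eq0 Hs)->] := eqVneq (a %% n)%N (b %% n)%N; last first.
    by rewrite !(mul0r, mulr0); exact: Eqv_scale0_eq Hc (canon_Typ _ _).
  have [e2|/(Fint_eq0 Ht)->] := eqVneq (c %% n)%N (d %% n)%N; last first.
    by rewrite !(mul0r, mulr0); exact: Eqv_scale0_eq Hc (canon_Typ _ _).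
  by rewrite canon_tens // Eqv_scaleM; try typecheck; rewrite mulrCA mulrA.
- by move=> a b; rewrite (Eqv_scale0 (canon_Typ a b)).
- move=> s t a b _ IHs _ IHt; apply: Etrans (EAdd IHs IHt) _.
  by symmetry; exact: EscaleDl (canon_Typ a b).
- move=> c t a b _ IHt; apply: Etrans (EScale c IHt) _.
  by rewrite Eqv_scaleM; try typecheck.
Qed.

Lemma Fint_faithful s t a b : Typ n s a b -> Typ n t a b ->
  Fint n z s = Fint n z t -> E s t.
Proof.
by move=> Hs Ht eF; rewrite (Eqv_Fint_canon Hs) (Eqv_Fint_canon Ht) eF.
Qed.

End NormalForm.

Theorem mainTheorem13 (K : closedFieldType) (hchar : [pchar K] =i pred0)
  (n : nat) (hn : (1 <= n)%N) (zeta : K) (hzeta : zeta ^+ n = 1)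
  (k : nat) (s t : tm K) :
  Typ n s k 0 -> Typ n t k 0 ->
  Fint n zeta s = Fint n zeta t -> Eqv n zeta s t.
Proof. exact: Fint_faithful. Qed.
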